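(* Let $m\ge1$. Then: (1) for every $h\in[0,2]$ the infimum defining $\delta_m(h)$ is attained, i.e. there is $P\in\mathfrak{P}_m(\Gamma)$ (equivalently a point $\phi^*\in\mathbb{R}^m$) with $\mathrm{mes}\{t\in\mathbb{T}:|P(e^{it})|\ge h\}=\delta_m(h)$; (2) $\delta_m(0)=2\pi$ and $\delta_m(2)=0$; (3) $\delta_m$ is strictly decreasing on $[0,2]$.
   Context: $\Gamma=\{e^{it}:t\in[0,2\pi]\}$ is the unit circle. $\mathfrak{P}_m(\Gamma)$ is the set of algebraic polynomials $P(z)=\prod_{j=1}^m(z-e^{i\phi_j})$, $\phi=(\phi_1,\dots,\phi_m)\in\mathbb{R}^m$, i.e. monic polynomials of degree $m$ all of whose zeros lie on $\Gamma$. $\mathbb{T}=[0,2\pi)$ with endpoints identified, with Lebesgue measure $\mathrm{mes}$. For $0\le h\le 2$, $\delta_m(h)=\inf\{\mathrm{mes}\{t\in\mathbb{T}:|P(e^{it})|\ge h\}:P\in\mathfrak{P}_m(\Gamma)\}$. Equivalently, with $g_m(t;\phi)=\prod_{j=1}^m 2\sin\frac{t-\phi_j}{2}$ (so $|g_m(t;\phi)|=|P(e^{it})|$), $\delta_m(h)=\inf_{\phi\in\mathbb{R}^m}\mathrm{mes}\{t\in[0,2\pi]:|g_m(t;\phi)|\ge h\}$. *)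

From Stdlib Require Import Reals.
Open Scope R_scope.

(* g_m(t;phi) = prod_{j=0}^{m-1} 2 sin((t - phi_j)/2); only phi 0..m-1 matter,
   so phi : nat -> R stands for a point of R^m. *)
Fixpoint gm (m : nat) (phi : nat -> R) (t : R) : R :=
  match m with
  | O => 1
  | S k => gm k phi t * (2 * sin ((t - phi k) / 2))
  end.

Definition superlevel (m : nat) (phi : nat -> R) (h : R) (t : R) : Prop :=
  0 <= t <= 2 * PI /\ h <= Rabs (gm m phi t).

Definition is_inf (E : R -> Prop) (x : R) : Prop :=
  (forall y, E y -> x <= y) /\ (forall z, (forall y, E y -> z <= y) -> z <= x).

Definition cover_length (S : R -> Prop) (l : R) : Prop :=
  exists a b : nat -> R,
    (forall n, a n <= b n) /\
    (forall t, S t -> exists n, a n <= t <= b n) /\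
    infinite_sum (fun n => b n - a n) l.

(* Lebesgue (outer) measure of S equals mu *)
Definition mes_is (S : R -> Prop) (mu : R) : Prop := is_inf (cover_length S) mu.

Definition delta_is (m : nat) (h d : R) : Prop :=
  is_inf (fun x => exists phi : nat -> R, mes_is (superlevel m phi h) x) d.

(* For h > 0, take a minimizing sequence of phases; after reduction modulo 2 PI it has a
   convergent subsequence.  [gm] is Lipschitz in the phases, and the level set {|gm| = h} of the
   limit configuration is finite: with u = tan ((t - phi 0) / 2), [gm^2] is [cos^(2m)] times a
   polynomial in u.  Covering the superlevel set by grid cells where |gm| > h plus small
   neighbourhoods of the level points shows that the measure of superlevel sets is upper
   semicontinuous at the limit, so the infimum is attained.

   The alternating sum of [gm] over m equally spaced points kills every harmonic except the
   two extreme ones, of amplitude 2: hence max |gm| >= 2 for every phi, with |gm| <= 2 when the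
   zeros are the m-th roots of unity, which gives delta_m(2) = 0.  For strict monotonicity take
   phi optimal for h1 < h2 <= 2: since |gm| vanishes somewhere and reaches 2, it lies strictly
   between h1 and h2 on a whole interval, which is counted at level h1 but not at level h2. *)

From Stdlib Require Import Reals Lra Lia Psatz List Classical ClassicalEpsilon.
Open Scope R_scope.

(** * Finite sums and series of nonnegative terms *)

(* [fsum N f] has the N terms [f 0 .. f (N-1)], unlike [sum_f_R0 f N]. *)
Fixpoint fsum (N : nat) (f : nat -> R) : R :=
  match N with O => 0 | S k => fsum k f + f k end.

Lemma sum_f_R0_fsum f n : sum_f_R0 f n = fsum (S n) f.
Proof. induction n; simpl in *; [lra | rewrite IHn; lra]. Qed.

Lemma fsum_ext N f g : (forall n, (n < N)%nat -> f n = g n) -> fsum N f = fsum N g.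
Proof.
  induction N; intros H; simpl; [lra|].
  rewrite IHN by (intros; apply H; lia). rewrite H by lia. lra.
Qed.

Lemma fsum_le N f g : (forall n, (n < N)%nat -> f n <= g n) -> fsum N f <= fsum N g.
Proof.
  induction N; intros H; simpl; [lra|].
  assert (fsum N f <= fsum N g) by (apply IHN; intros; apply H; lia).
  assert (f N <= g N) by (apply H; lia). lra.
Qed.

Lemma fsum_plus N f g : fsum N (fun n => f n + g n) = fsum N f + fsum N g.
Proof. induction N; simpl; [lra | rewrite IHN; lra]. Qed.

Lemma fsum_scal N c f : fsum N (fun n => c * f n) = c * fsum N f.
Proof. induction N; simpl; [lra | rewrite IHN; lra]. Qed.

Lemma fsum_const N c : fsum N (fun _ => c) = INR N * c.
Proof. induction N; simpl fsum; [simpl; lra | rewrite IHN, S_INR; lra]. Qed.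

Lemma fsum_nonneg N f : (forall n, (n < N)%nat -> 0 <= f n) -> 0 <= fsum N f.
Proof.
  intros H. replace 0 with (INR N * 0) by ring. rewrite <- fsum_const. now apply fsum_le.
Qed.

Lemma fsum_telescope N (T : nat -> R) : fsum N (fun k => T k - T (S k)) = T O - T N.
Proof. induction N; simpl; [ring | rewrite IHN; ring]. Qed.

Lemma infinite_sum_ext c d l :
  (forall n, c n = d n) -> infinite_sum c l -> infinite_sum d l.
Proof.
  intros H. apply Un_cv_ext. intro n. apply sum_eq. auto.
Qed.

Lemma infinite_sum_ge_fsum c l :
  (forall n, 0 <= c n) -> infinite_sum c l -> forall N, fsum N c <= l.
Proof.
  intros Hc Hl N.
  assert (Hg : Un_growing (sum_f_R0 c)) by (intro n; simpl; specialize (Hc (S n)); lra).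
  destruct N as [|N].
  - pose proof (growing_ineq _ _ Hg Hl O). simpl in *. specialize (Hc O). lra.
  - rewrite <- sum_f_R0_fsum. now apply growing_ineq.
Qed.

Lemma infinite_sum_nonneg c l : (forall n, 0 <= c n) -> infinite_sum c l -> 0 <= l.
Proof. intros Hc Hl. exact (infinite_sum_ge_fsum c l Hc Hl O). Qed.

Lemma infinite_sum_le c d l1 l2 :
  (forall n, c n <= d n) -> infinite_sum c l1 -> infinite_sum d l2 -> l1 <= l2.
Proof.
  intros H. apply Rle_cv_lim. intro n. apply sum_Rle. auto.
Qed.

Lemma infinite_sum_plus c d l1 l2 :
  infinite_sum c l1 -> infinite_sum d l2 -> infinite_sum (fun n => c n + d n) (l1 + l2).
Proof.
  intros H1 H2. eapply Un_cv_ext; [| apply CV_plus; [apply H1 | apply H2]].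
  intro n. simpl. now rewrite sum_plus.
Qed.

Lemma infinite_sum_comparison c d l :
  (forall n, 0 <= c n <= d n) -> infinite_sum d l -> exists l', infinite_sum c l' /\ l' <= l.
Proof.
  intros Hcd Hd.
  destruct (Rseries_CV_comp c d Hcd (exist _ l Hd)) as [l' Hc].
  exists l'. split; [exact Hc|]. eapply infinite_sum_le; [| exact Hc | exact Hd].
  intro n; apply Hcd.
Qed.

Lemma infinite_sum_fsum c N :
  (forall n, (N <= n)%nat -> c n = 0) -> infinite_sum c (fsum N c).
Proof.
  intros H eps Heps. exists N. intros n Hn. rewrite sum_f_R0_fsum.
  replace (fsum (S n) c) with (fsum N c).
  { unfold R_dist; rewrite Rminus_diag, Rabs_R0; lra. }
  replace (S n) with (N + (S n - N))%nat by lia. generalize (S n - N)%nat as k.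
  induction k; [now rewrite Nat.add_0_r|].
  rewrite Nat.add_succ_r. simpl. rewrite <- IHk, H by lia. lra.
Qed.

Definition interleave (c d : nat -> R) (n : nat) : R :=
  if Nat.even n then c (Nat.div2 n) else d (Nat.div2 n).

Lemma interleave_even c d n : interleave c d (2 * n) = c n.
Proof. unfold interleave. now rewrite Nat.even_mul, Nat.div2_double. Qed.

Lemma interleave_odd c d n : interleave c d (S (2 * n)) = d n.
Proof.
  unfold interleave. rewrite Nat.even_succ, <- Nat.negb_even, Nat.even_mul, Nat.div2_succ_double.
  reflexivity.
Qed.

Lemma fsum_interleave_even c d N :
  fsum (2 * N) (interleave c d) = fsum N c + fsum N d.
Proof.
  induction N; [simpl; lra|].
  replace (2 * S N)%nat with (S (S (2 * N))) by lia.
  change (fsum (S (S (2 * N))) (interleave c d))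
    with (fsum (2 * N) (interleave c d) + interleave c d (2 * N) + interleave c d (S (2 * N))).
  rewrite IHN, interleave_even, interleave_odd. simpl. lra.
Qed.

Lemma fsum_interleave_odd c d N :
  fsum (S (2 * N)) (interleave c d) = fsum (S N) c + fsum N d.
Proof.
  change (fsum (S (2 * N)) (interleave c d))
    with (fsum (2 * N) (interleave c d) + interleave c d (2 * N)).
  rewrite fsum_interleave_even, interleave_even. simpl. lra.
Qed.

Lemma infinite_sum_interleave c d l1 l2 :
  infinite_sum c l1 -> infinite_sum d l2 -> infinite_sum (interleave c d) (l1 + l2).
Proof.
  intros H1 H2 eps Heps.
  destruct (H1 (eps / 2)) as [N1 HN1]; [lra|]. destruct (H2 (eps / 2)) as [N2 HN2]; [lra|].
  assert (Hsum : forall i j, (N1 <= i)%nat -> (N2 <= j)%nat ->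
            Rabs (sum_f_R0 c i + sum_f_R0 d j - (l1 + l2)) < eps).
  { intros i j Hi Hj. specialize (HN1 i Hi). specialize (HN2 j Hj). unfold R_dist in *.
    replace (sum_f_R0 c i + sum_f_R0 d j - (l1 + l2))
      with ((sum_f_R0 c i - l1) + (sum_f_R0 d j - l2)) by ring.
    eapply Rle_lt_trans; [apply Rabs_triang | lra]. }
  exists (2 * (N1 + N2) + 2)%nat. intros n Hn. unfold R_dist. rewrite sum_f_R0_fsum.
  destruct (Nat.Even_or_Odd (S n)) as [[k Hk]|[k Hk]]; rewrite Hk.
  - destruct k as [|k]; [lia|].
    rewrite fsum_interleave_even, <- !sum_f_R0_fsum. apply Hsum; lia.
  - replace (2 * k + 1)%nat with (S (2 * k)) by lia.
    destruct k as [|k]; [lia|].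
    rewrite fsum_interleave_odd, <- !sum_f_R0_fsum. apply Hsum; lia.
Qed.

(** * Outer measure through countable covers by closed intervals *)

Lemma cover_length_nonneg S l : cover_length S l -> 0 <= l.
Proof.
  intros [a [b [Hab [_ Hl]]]]. eapply infinite_sum_nonneg; [| exact Hl].
  intro n; specialize (Hab n); lra.
Qed.

Lemma cover_length_mono (S T : R -> Prop) l :
  (forall t, S t -> T t) -> cover_length T l -> cover_length S l.
Proof. intros H [a [b [H1 [H2 H3]]]]. exists a, b; repeat split; auto. Qed.

Lemma cover_length_fsum (S : R -> Prop) N (a b : nat -> R) :
  (forall n, (n < N)%nat -> a n <= b n) ->
  (forall t, S t -> exists n, (n < N)%nat /\ a n <= t <= b n) ->
  cover_length S (fsum N (fun n => b n - a n)).
Proof.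
  intros Hab Hcov.
  set (a' := fun n => if (n <? N)%nat then a n else 0).
  set (b' := fun n => if (n <? N)%nat then b n else 0).
  exists a', b'. unfold a', b'. repeat split.
  - intro n; destruct (Nat.ltb_spec n N); [now apply Hab | lra].
  - intros t Ht; destruct (Hcov t Ht) as [n [Hn Ht']]. exists n.
    destruct (Nat.ltb_spec n N); [exact Ht' | lia].
  - rewrite (fsum_ext N _ (fun n => b' n - a' n)).
    + apply infinite_sum_fsum. intros n Hn. unfold a', b'. destruct (Nat.ltb_spec n N); [lia | lra].
    + intros n Hn. unfold a', b'. destruct (Nat.ltb_spec n N); [reflexivity | lia].
Qed.

Lemma cover_length_interval (S : R -> Prop) p q :
  p <= q -> (forall t, S t -> p <= t <= q) -> cover_length S (q - p).
Proof.
  intros Hpq HS. replace (q - p) with (fsum 1 (fun _ => q - p)) by (simpl; lra).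
  apply cover_length_fsum; [intros; lra |]. intros t Ht. exists O. split; auto.
Qed.

Lemma cover_length_finite_set (S : R -> Prop) Z :
  (forall t, S t -> In t Z) -> cover_length S 0.
Proof.
  intros H. replace 0 with (fsum (length Z) (fun i => nth i Z 0 - nth i Z 0)).
  - apply cover_length_fsum; [intros; lra |]. intros t Ht.
    destruct (In_nth Z t 0 (H t Ht)) as [i [Hi Hnth]]. exists i. split; [exact Hi | lra].
  - rewrite (fsum_ext _ _ (fun _ => 0)), fsum_const; [ring | intros; ring].
Qed.

Lemma cover_length_union (A B : R -> Prop) la lb :
  cover_length A la -> cover_length B lb -> cover_length (fun t => A t \/ B t) (la + lb).
Proof.
  intros [a1 [b1 [H1 [H2 H3]]]] [a2 [b2 [K1 [K2 K3]]]].
  exists (interleave a1 a2), (interleave b1 b2). repeat split.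
  - intro n; unfold interleave; destruct (Nat.even n); auto.
  - intros t [Ht|Ht].
    + destruct (H2 t Ht) as [n Hn]. exists (2 * n)%nat. now rewrite !interleave_even.
    + destruct (K2 t Ht) as [n Hn]. exists (S (2 * n)). now rewrite !interleave_odd.
  - eapply infinite_sum_ext; [| exact (infinite_sum_interleave _ _ _ _ H3 K3)].
    intro n; unfold interleave; destruct (Nat.even n); reflexivity.
Qed.

(* Cutting every interval of a cover at [c] splits it into covers of the two sides. *)
Lemma cover_length_split (A B : R -> Prop) c L :
  (forall t, A t -> t <= c) -> (forall t, B t -> c <= t) ->
  cover_length (fun t => A t \/ B t) L ->
  exists la lb, cover_length A la /\ cover_length B lb /\ la + lb <= L.
Proof.
  intros HA HB [a [b [Hab [Hcov Hsum]]]].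
  set (bA := fun n => Rmax (a n) (Rmin (b n) c)).
  set (aB := fun n => Rmin (b n) (Rmax (a n) c)).
  assert (EA : forall n, 0 <= bA n - a n <= b n - a n).
  { intro n; unfold bA, Rmax, Rmin; specialize (Hab n); repeat destruct Rle_dec; lra. }
  assert (EB : forall n, 0 <= b n - aB n <= b n - a n).
  { intro n; unfold aB, Rmax, Rmin; specialize (Hab n); repeat destruct Rle_dec; lra. }
  assert (EAB : forall n, (bA n - a n) + (b n - aB n) <= b n - a n).
  { intro n; unfold aB, bA, Rmax, Rmin; specialize (Hab n); repeat destruct Rle_dec; lra. }
  destruct (infinite_sum_comparison _ _ _ EA Hsum) as [la [Hla _]].
  destruct (infinite_sum_comparison _ _ _ EB Hsum) as [lb [Hlb _]].
  exists la, lb. repeat split.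
  - exists a, bA. repeat split; auto.
    + intro n; specialize (EA n); lra.
    + intros t Ht. destruct (Hcov t (or_introl Ht)) as [n Hn]. exists n. specialize (HA t Ht).
      unfold bA, Rmax, Rmin; repeat destruct Rle_dec; lra.
  - exists aB, b. repeat split; auto.
    + intro n; specialize (EB n); lra.
    + intros t Ht. destruct (Hcov t (or_intror Ht)) as [n Hn]. exists n. specialize (HB t Ht).
      unfold aB, Rmax, Rmin; repeat destruct Rle_dec; lra.
  - eapply infinite_sum_le; [exact EAB | apply infinite_sum_plus; eauto | exact Hsum].
Qed.

Fixpoint list_length (l : list (R * R)) : R :=
  match l with nil => 0 | p :: l' => (snd p - fst p) + list_length l' end.

Lemma list_length_app l1 l2 : list_length (l1 ++ l2) = list_length l1 + list_length l2.
Proof. induction l1; simpl; [lra | rewrite IHl1; lra]. Qed.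

Lemma list_length_nonneg l : (forall p, In p l -> fst p < snd p) -> 0 <= list_length l.
Proof.
  induction l as [|p l IH]; intros H; simpl; [lra|].
  assert (fst p < snd p) by (apply H; left; auto).
  assert (0 <= list_length l) by (apply IH; intros; apply H; right; auto). lra.
Qed.

(* Induction on the number of intervals: remove the one containing [b]. *)
Lemma finite_open_cover_length k l a b :
  (length l <= k)%nat -> (forall p, In p l -> fst p < snd p) -> a <= b ->
  (forall t, a <= t <= b -> exists p, In p l /\ fst p < t < snd p) -> b - a < list_length l.
Proof.
  revert l a b. induction k as [|k IH]; intros l a b Hlen Hpos Hab Hcov.
  - destruct l; [|simpl in Hlen; lia]. destruct (Hcov b) as [p [[] _]]; lra.
  - destruct (Hcov b) as [p [Hp [Hc Hd]]]; [lra|].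
    destruct (in_split p l Hp) as [l1 [l2 ->]].
    assert (Hpos' : forall p', In p' (l1 ++ l2) -> fst p' < snd p').
    { intros p' Hp'; apply Hpos. apply in_or_app. apply in_app_or in Hp'. simpl; tauto. }
    assert (Hs : list_length (l1 ++ p :: l2) = list_length (l1 ++ l2) + (snd p - fst p)).
    { rewrite !list_length_app. simpl. lra. }
    rewrite Hs. pose proof (list_length_nonneg _ Hpos').
    destruct (Rlt_or_le (fst p) a); [lra|].
    assert (fst p - a < list_length (l1 ++ l2)); [|lra].
    apply IH; auto.
    + rewrite length_app in *. simpl in Hlen. lia.
    + intros t Ht. destruct (Hcov t) as [p' [Hp' Ht']]; [lra|]. exists p'. split; auto.
      apply in_app_or in Hp'. destruct Hp' as [Hp'|[Hp'|Hp']]; try (apply in_or_app; tauto).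
      subst p'. lra.
Qed.

Lemma list_length_map_seq N (c d : nat -> R) :
  list_length (map (fun n => (c n, d n)) (seq 0 N)) = fsum N (fun n => d n - c n).
Proof. induction N; [reflexivity|]. rewrite seq_S, map_app, list_length_app, IHN. simpl. lra. Qed.

Lemma list_nat_bound (l : list R) : exists N, forall n, In (INR n) l -> (n < N)%nat.
Proof.
  induction l as [|a l [N HN]]; [exists O; intros n [] |].
  destruct (classic (exists n, a = INR n)) as [[n0 ->]|Hn].
  - exists (Nat.max N (S n0)). intros n [H|H]; [apply INR_eq in H; lia | specialize (HN n H); lia].
  - exists N. intros n [H|H]; [exfalso; apply Hn; eauto | auto].
Qed.

Lemma fsum_geometric N : fsum N (fun n => / 2 ^ S n) = 1 - / 2 ^ N.
Proof.
  induction N; [simpl; lra|].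
  change (fsum (S N) _) with (fsum N (fun n => / 2 ^ S n) + / 2 ^ S N).
  rewrite IHN. simpl pow.
  pose proof (pow_lt 2 N ltac:(lra)). field. lra.
Qed.

(* Enlarge the n-th interval by [eps / 2^(n+1)] to make it open and apply Borel-Lebesgue. *)
Lemma cover_length_interval_ge p q L :
  p <= q -> cover_length (fun t => p <= t <= q) L -> q - p <= L.
Proof.
  intros Hpq [a [b [Hab [Hcov Hsum]]]].
  destruct (Rle_or_lt (q - p) L) as [|HL]; [assumption | exfalso].
  set (eps := (q - p - L) / 2). assert (Heps : 0 < eps) by (unfold eps; lra).
  set (w := fun n => / 2 ^ S n).
  assert (Hw : forall n, 0 < w n) by (intro n; apply Rinv_0_lt_compat, pow_lt; lra).
  set (c := fun n => a n - eps * w n / 2). set (d := fun n => b n + eps * w n / 2).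
  assert (Hcd : forall n, a n - c n > 0 /\ d n - b n > 0).
  { intro n; unfold c, d. specialize (Hw n). split; nra. }
  set (F := {| Rtopology.ind := fun x => exists n, x = INR n;
               Rtopology.f := fun x y => exists n, x = INR n /\ c n < y < d n;
               Rtopology.cond_fam := fun x (H : exists y n, x = INR n /\ c n < y < d n) =>
                  match H with ex_intro _ _ (ex_intro _ n (conj E _)) => ex_intro _ n E end |}).
  destruct (compact_P3 p q F) as [D [HD [l Hl]]].
  - split.
    + intros t Ht. destruct (Hcov t Ht) as [n Hn]. exists (INR n). simpl. exists n.
      specialize (Hcd n). split; [reflexivity | lra].
    + intros x y [n [Hx Hy]]. simpl in *.
      assert (Hd : 0 < Rmin (y - c n) (d n - y)) by (apply Rmin_pos; lra).
      exists (mkposreal _ Hd). intros z Hz. unfold Rtopology.disc in Hz; simpl in Hz.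
      exists n. split; auto. pose proof (Rmin_l (y - c n) (d n - y)).
      pose proof (Rmin_r (y - c n) (d n - y)). apply Rabs_def2 in Hz. lra.
  - destruct (list_nat_bound l) as [N HN].
    assert (Hlt : q - p < fsum N (fun n => d n - c n)).
    { rewrite <- list_length_map_seq.
      apply (finite_open_cover_length (length (map (fun n => (c n, d n)) (seq 0 N)))); auto.
      - intros pr Hpr. apply in_map_iff in Hpr. destruct Hpr as [n [<- _]].
        simpl. specialize (Hcd n). specialize (Hab n). lra.
      - intros t Ht. destruct (HD t Ht) as [y [[n [-> Hn]] Hy]]. exists (c n, d n).
        split; [| exact Hn]. apply in_map_iff. exists n. split; [reflexivity|].
        apply in_seq. split; [lia|]. apply HN, Hl. simpl. split; [eauto | exact Hy]. }
    assert (E : fsum N (fun n => d n - c n) = fsum N (fun n => b n - a n) + eps * fsum N w).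
    { rewrite <- fsum_scal, <- fsum_plus. apply fsum_ext. intros; unfold c, d; lra. }
    assert (fsum N (fun n => b n - a n) <= L).
    { apply infinite_sum_ge_fsum; [| exact Hsum]. intro n; specialize (Hab n); lra. }
    assert (fsum N w <= 1).
    { unfold w. rewrite fsum_geometric. pose proof (Rinv_0_lt_compat _ (pow_lt 2 N ltac:(lra))). lra. }
    unfold eps in *. nra.
Qed.

Lemma is_inf_exists (E : R -> Prop) b :
  (exists x, E x) -> (forall x, E x -> b <= x) -> exists d, is_inf E d.
Proof.
  intros [x0 Hx0] Hlb.
  destruct (completeness (fun y => E (- y))) as [s [Hs1 Hs2]].
  - exists (- b). intros y Hy. apply Hlb in Hy. lra.
  - exists (- x0). cbv beta. rewrite Ropp_involutive. exact Hx0.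
  - exists (- s). split.
    + intros y Hy. assert (- y <= s) by (apply Hs1; now rewrite Ropp_involutive). lra.
    + intros z Hz. assert (s <= - z); [apply Hs2; intros y Hy; apply Hz in Hy; lra | lra].
Qed.

Lemma is_inf_approx (E : R -> Prop) d eps : is_inf E d -> 0 < eps -> exists x, E x /\ x < d + eps.
Proof.
  intros [_ H] Heps. apply NNPP. intro Hn. assert (d + eps <= d); [| lra].
  apply H. intros y Hy. apply Rnot_lt_le. intro; apply Hn; eauto.
Qed.

Lemma mes_exists_bounded (S : R -> Prop) p q :
  p <= q -> (forall t, S t -> p <= t <= q) -> exists x, mes_is S x.
Proof.
  intros Hpq HS. apply (is_inf_exists _ 0).
  - exists (q - p). now apply cover_length_interval.
  - apply cover_length_nonneg.
Qed.

Lemma mes_le_cover S x l : mes_is S x -> cover_length S l -> x <= l.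
Proof. intros [H _] Hl. now apply H. Qed.

Lemma mes_nonneg S x : mes_is S x -> 0 <= x.
Proof. intros [_ H]. apply H, cover_length_nonneg. Qed.

Lemma mes_unique S x y : mes_is S x -> mes_is S y -> x = y.
Proof. intros [H1 H2] [K1 K2]. apply Rle_antisym; [apply K2 | apply H2]; auto. Qed.

Lemma mes_mono (S T : R -> Prop) x y :
  (forall t, S t -> T t) -> mes_is S x -> mes_is T y -> x <= y.
Proof.
  intros H [H1 _] [_ K2]. apply K2. intros l Hl. apply H1. eapply cover_length_mono; eauto.
Qed.

Lemma mes_ext (S T : R -> Prop) x : (forall t, S t <-> T t) -> mes_is S x -> mes_is T x.
Proof.
  intros H [H1 H2]. split.
  - intros y Hy. apply H1. eapply cover_length_mono; [| exact Hy]. intros; now apply H.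
  - intros z Hz. apply H2. intros y Hy. apply Hz.
    eapply cover_length_mono; [| exact Hy]. intros; now apply H.
Qed.

Lemma mes_finite_set (S : R -> Prop) Z x : (forall t, S t -> In t Z) -> mes_is S x -> x = 0.
Proof.
  intros HZ Hx. apply Rle_antisym; [| exact (mes_nonneg _ _ Hx)].
  eapply mes_le_cover; [exact Hx |]. exact (cover_length_finite_set S Z HZ).
Qed.

Lemma mes_le_add_cover (S A B : R -> Prop) x a l :
  (forall t, S t -> A t \/ B t) -> mes_is S x -> mes_is A a -> cover_length B l -> x <= a + l.
Proof.
  intros H Hx [_ Ha] Hl. enough (x - l <= a) by lra.
  apply Ha. intros la Hla. enough (x <= la + l) by lra.
  eapply mes_le_cover; [exact Hx |]. eapply cover_length_mono; [exact H |].
  now apply cover_length_union.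
Qed.

Lemma mes_subadditive (S A B : R -> Prop) x a b :
  (forall t, S t -> A t \/ B t) -> mes_is S x -> mes_is A a -> mes_is B b -> x <= a + b.
Proof.
  intros H Hx Ha [_ Hb]. enough (x - a <= b) by lra.
  apply Hb. intros lb Hlb. pose proof (mes_le_add_cover S A B x a lb H Hx Ha Hlb). lra.
Qed.

Lemma mes_split_superadditive (A B : R -> Prop) c a b z :
  (forall t, A t -> t <= c) -> (forall t, B t -> c <= t) ->
  mes_is A a -> mes_is B b -> mes_is (fun t => A t \/ B t) z -> a + b <= z.
Proof.
  intros HA HB Ha Hb [_ Hz]. apply Hz. intros L HL.
  destruct (cover_length_split A B c L HA HB HL) as [la [lb [H1 [H2 H3]]]].
  pose proof (mes_le_cover _ _ _ Ha H1). pose proof (mes_le_cover _ _ _ Hb H2). lra.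
Qed.

Lemma mes_interval p q : p <= q -> mes_is (fun t => p <= t <= q) (q - p).
Proof.
  intros Hpq. split.
  - intros y Hy. now apply cover_length_interval_ge.
  - intros z Hz. apply Hz. now apply cover_length_interval.
Qed.

Lemma mes_add_gap (S T : R -> Prop) p q lo hi x y :
  p <= q -> (forall t, T t -> lo <= t <= hi) -> (forall t, S t -> T t) ->
  (forall t, p <= t <= q -> T t /\ ~ S t) ->
  mes_is S x -> mes_is T y -> x + (q - p) <= y.
Proof.
  intros Hpq HT HST Hgap Hx Hy.
  set (A := fun t => S t /\ t <= p). set (B := fun t => S t /\ q <= t).
  set (J := fun t => p <= t <= q).
  assert (HS : forall t, S t -> lo <= t <= hi) by auto.
  assert (Hlh : lo <= hi).
  { destruct (Hgap p) as [Hp _]; [lra|]. specialize (HT p Hp). lra. }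
  destruct (mes_exists_bounded A lo hi) as [a Ha]; [lra | intros t [Ht _]; auto |].
  destruct (mes_exists_bounded B lo hi) as [b Hb]; [lra | intros t [Ht _]; auto |].
  destruct (mes_exists_bounded (fun t => J t \/ B t) lo hi) as [jb Hjb]; [lra |
    intros t [Ht|[Ht _]]; [apply HT, Hgap | apply HS]; auto |].
  assert (E1 : x <= a + b).
  { apply (mes_subadditive S A B x); auto. intros t Ht. unfold A, B.
    destruct (Rle_or_lt t p); [now left|]. destruct (Rle_or_lt q t); [now right|].
    exfalso. apply (Hgap t); [lra | exact Ht]. }
  assert (E2 : (q - p) + b <= jb).
  { apply (mes_split_superadditive J B q); auto; [intros t Ht; unfold J in Ht; lra |
      intros t [_ Ht]; exact Ht | now apply mes_interval]. }
  assert (E3 : a + jb <= y).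
  { destruct (mes_exists_bounded (fun t => A t \/ (J t \/ B t)) lo hi) as [ajb Hajb];
      [lra | intros t [[Ht _]|[Ht|[Ht _]]]; [apply HS | apply HT, Hgap | apply HS]; auto |].
    assert (a + jb <= ajb).
    { apply (mes_split_superadditive A (fun t => J t \/ B t) p); auto;
        [intros t [_ Ht]; exact Ht | intros t [Ht|[_ Ht]]; unfold J in Ht; lra]. }
    assert (ajb <= y); [| lra].
    apply (mes_mono (fun t => A t \/ (J t \/ B t)) T ajb y); auto.
    intros t [[Ht _]|[Ht|[Ht _]]]; auto. now apply Hgap. }
  lra.
Qed.

Lemma gm_continuous m phi : continuity (gm m phi).
Proof.
  induction m; simpl.
  - apply continuity_const. intros x y; reflexivity.
  - apply continuity_mult; [exact IHm |]. apply derivable_continuous. reg.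
Qed.

Lemma gm_abs_continuous m phi : continuity (fun t => Rabs (gm m phi t)).
Proof. intro x. apply (continuity_pt_comp (gm m phi) Rabs); [apply gm_continuous | apply Rcontinuity_abs]. Qed.

Lemma gm_abs_le m phi t : Rabs (gm m phi t) <= 2 ^ m.
Proof.
  induction m; simpl; [rewrite Rabs_R1; lra|].
  rewrite !Rabs_mult, (Rabs_right 2) by lra.
  pose proof (SIN_bound ((t - phi m) / 2)).
  assert (Rabs (sin ((t - phi m) / 2)) <= 1) by (apply Rabs_le; lra).
  pose proof (Rabs_pos (gm m phi t)). pose proof (Rabs_pos (sin ((t - phi m) / 2))). nra.
Qed.

Lemma sin_lipschitz x y : Rabs (sin x - sin y) <= Rabs (x - y).
Proof.
  destruct (MVT_abs sin cos y x) as [c [Hc _]]; [intros; apply derivable_pt_lim_sin |].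
  rewrite Hc. pose proof (COS_bound c). assert (Rabs (cos c) <= 1) by (apply Rabs_le; lra).
  pose proof (Rabs_pos (x - y)). nra.
Qed.

Lemma gm_lipschitz m phi psi t :
  Rabs (gm m phi t - gm m psi t) <= 2 ^ m * fsum m (fun j => Rabs (phi j - psi j)).
Proof.
  induction m; simpl; [rewrite Rminus_diag, Rabs_R0; lra|].
  set (a := gm m phi t). set (b := gm m psi t).
  set (x := 2 * sin ((t - phi m) / 2)). set (y := 2 * sin ((t - psi m) / 2)).
  replace (a * x - b * y) with ((a - b) * x + b * (x - y)) by ring.
  eapply Rle_trans; [apply Rabs_triang|]. rewrite !Rabs_mult.
  assert (Hx : Rabs x <= 2).
  { unfold x. rewrite Rabs_mult, Rabs_right by lra. pose proof (SIN_bound ((t - phi m) / 2)).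
    assert (Rabs (sin ((t - phi m) / 2)) <= 1) by (apply Rabs_le; lra). lra. }
  assert (Hxy : Rabs (x - y) <= Rabs (phi m - psi m)).
  { unfold x, y. rewrite <- Rmult_minus_distr_l, Rabs_mult, (Rabs_right 2) by lra.
    pose proof (sin_lipschitz ((t - phi m) / 2) ((t - psi m) / 2)) as Hs.
    replace ((t - phi m) / 2 - (t - psi m) / 2) with ((psi m - phi m) * / 2) in Hs by field.
    rewrite Rabs_mult, (Rabs_right (/ 2)), (Rabs_minus_sym (psi m)) in Hs
      by (left; apply Rinv_0_lt_compat; lra). lra. }
  pose proof IHm as Hab. fold a b in Hab. pose proof (gm_abs_le m psi t) as Hb. fold b in Hb.
  assert (0 <= fsum m (fun j => Rabs (phi j - psi j))) by (apply fsum_nonneg; intros; apply Rabs_pos).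
  pose proof (Rabs_pos (a - b)). pose proof (Rabs_pos b). pose proof (Rabs_pos (x - y)).
  pose proof (pow_lt 2 m ltac:(lra)).
  assert (Rabs (a - b) * Rabs x <= 2 ^ m * fsum m (fun j => Rabs (phi j - psi j)) * 2)
    by (apply Rmult_le_compat; auto; apply Rabs_pos).
  assert (Rabs b * Rabs (x - y) <= 2 ^ m * Rabs (phi m - psi m)) by (apply Rmult_le_compat; auto).
  nra.
Qed.

Lemma gm_uniform_limit m (psi : nat -> nat -> R) phi :
  (forall j, (j < m)%nat -> Un_cv (fun n => psi n j) (phi j)) ->
  forall eps, 0 < eps -> exists N, forall n t, (N <= n)%nat ->
    Rabs (Rabs (gm m (psi n) t) - Rabs (gm m phi t)) < eps.
Proof.
  intros Hcv eps Heps.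
  assert (Hsum : forall e, 0 < e -> exists N, forall n, (N <= n)%nat ->
            fsum m (fun j => Rabs (psi n j - phi j)) < e).
  { clear eps Heps. induction m; intros e He; [exists O; intros; simpl; lra|].
    destruct (IHm (fun j Hj => Hcv j (Nat.lt_lt_succ_r _ _ Hj)) (e / 2)) as [N1 HN1]; [lra|].
    destruct (Hcv m (Nat.lt_succ_diag_r m) (e / 2)) as [N2 HN2]; [lra|].
    exists (Nat.max N1 N2). intros n Hn. simpl.
    specialize (HN1 n ltac:(lia)). specialize (HN2 n ltac:(lia)). unfold R_dist in HN2. lra. }
  assert (H2m : 0 < 2 ^ m) by (apply pow_lt; lra).
  destruct (Hsum (eps / 2 ^ m)) as [N HN]; [now apply Rdiv_lt_0_compat |].
  exists N. intros n t Hn. specialize (HN n Hn).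
  eapply Rle_lt_trans; [apply Rabs_triang_inv2 |].
  eapply Rle_lt_trans; [apply gm_lipschitz |].
  apply (Rmult_lt_compat_l (2 ^ m)) in HN; [| exact H2m].
  replace (2 ^ m * (eps / 2 ^ m)) with eps in HN by (field; lra). exact HN.
Qed.

Lemma sin_abs_shift x (k : Z) : Rabs (sin (x + IZR k * PI)) = Rabs (sin x).
Proof.
  rewrite sin_plus, (sin_eq_0_1 (IZR k * PI)) by eauto.
  assert (Hc : cos (IZR k * PI) * cos (IZR k * PI) = 1).
  { pose proof (sin2_cos2 (IZR k * PI)). rewrite (sin_eq_0_1 (IZR k * PI)) in H by eauto.
    unfold Rsqr in H. lra. }
  assert (Rabs (cos (IZR k * PI)) = 1).
  { pose proof (Rabs_pos (cos (IZR k * PI))).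
    assert (Rabs (cos (IZR k * PI)) * Rabs (cos (IZR k * PI)) = 1) by (rewrite <- Rabs_mult, Hc; apply Rabs_R1).
    nra. }
  rewrite Rmult_0_r, Rplus_0_r, Rabs_mult, H. ring.
Qed.

Lemma gm_abs_shift m phi psi t s :
  (forall j, (j < m)%nat -> exists k : Z, (s - psi j) - (t - phi j) = IZR k * (2 * PI)) ->
  Rabs (gm m psi s) = Rabs (gm m phi t).
Proof.
  induction m; intros H; simpl; [reflexivity|]. rewrite !Rabs_mult.
  rewrite IHm by (intros; apply H; lia).
  destruct (H m ltac:(lia)) as [k Hk].
  replace ((s - psi m) / 2) with ((t - phi m) / 2 + IZR k * PI) by lra.
  now rewrite sin_abs_shift.
Qed.

Definition wrap (x : R) : R := 2 * PI * frac_part (x / (2 * PI)).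

Lemma wrap_bounds x : 0 <= wrap x < 2 * PI.
Proof. unfold wrap. pose proof PI_RGT_0. pose proof (base_fp (x / (2 * PI))). nra. Qed.

Lemma wrap_shift x : exists k : Z, wrap x - x = IZR k * (2 * PI).
Proof.
  exists (- Int_part (x / (2 * PI)))%Z. unfold wrap, frac_part. rewrite opp_IZR.
  pose proof PI_RGT_0. field. lra.
Qed.

Lemma gm_abs_wrap_time m phi t : Rabs (gm m phi (wrap t)) = Rabs (gm m phi t).
Proof.
  apply gm_abs_shift. intros j _. destruct (wrap_shift t) as [k Hk]. exists k. lra.
Qed.

Lemma gm_abs_wrap_phases m phi t : Rabs (gm m (fun j => wrap (phi j)) t) = Rabs (gm m phi t).
Proof.
  apply gm_abs_shift. intros j _. destruct (wrap_shift (phi j)) as [k Hk]. exists (- k)%Z.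
  rewrite opp_IZR. lra.
Qed.

Lemma gm_has_root m phi : (1 <= m)%nat -> exists t, 0 <= t <= 2 * PI /\ gm m phi t = 0.
Proof.
  intros Hm. exists (wrap (phi O)). split; [pose proof (wrap_bounds (phi O)); lra |].
  assert (Hroot : gm m phi (phi O) = 0).
  { induction Hm; simpl; [| rewrite IHHm; ring].
    rewrite Rminus_diag. unfold Rdiv. rewrite Rmult_0_l, sin_0. ring. }
  pose proof (gm_abs_wrap_time m phi (phi O)) as H. rewrite Hroot, Rabs_R0 in H.
  destruct (Req_dec (gm m phi (wrap (phi O))) 0) as [|Hne]; [assumption|].
  now apply Rabs_no_R0 in Hne.
Qed.

(** * The sup norm of [gm] is at least 2, with equality for the m-th roots of unity *)

(* [gm m phi] is a trigonometric polynomial with frequencies [freq m j], [j = 0 .. m];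
   the two extreme frequencies [+-m/2] combine into [A cos (m t / 2) + B sin (m t / 2)]. *)
Definition freq (m j : nat) : R := INR m / 2 - INR j.

Inductive mid_harmonic (m : nat) : (R -> R) -> Prop :=
| mid_harmonic_0 : mid_harmonic m (fun _ => 0)
| mid_harmonic_add f j a b : (1 <= j)%nat -> (j + 1 <= m)%nat -> mid_harmonic m f ->
    mid_harmonic m (fun t => f t + a * cos (freq m j * t) + b * sin (freq m j * t))
| mid_harmonic_ext f g : mid_harmonic m f -> (forall t, f t = g t) -> mid_harmonic m g.

Lemma mid_harmonic_plus m f g :
  mid_harmonic m f -> mid_harmonic m g -> mid_harmonic m (fun t => f t + g t).
Proof.
  intros Hf Hg. induction Hg as [| g j a b Hj Hjm Hg IH | g g' Hg IH E].
  - eapply mid_harmonic_ext; [exact Hf|]. intro; lra.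
  - eapply mid_harmonic_ext; [apply (mid_harmonic_add m (fun t => f t + g t) j a b); auto |].
    intro t; lra.
  - eapply mid_harmonic_ext; [exact IH |]. intro t; cbv beta; now rewrite E.
Qed.

Lemma harmonic_mul_factor m j a b p t :
  (a * cos (freq m j * t) + b * sin (freq m j * t)) * (2 * sin ((t - p) / 2)) =
  (- a * sin (p / 2) - b * cos (p / 2)) * cos (freq (S m) j * t)
  + (a * cos (p / 2) - b * sin (p / 2)) * sin (freq (S m) j * t)
  + ((- a * sin (p / 2) + b * cos (p / 2)) * cos (freq (S m) (S j) * t)
     + (- a * cos (p / 2) - b * sin (p / 2)) * sin (freq (S m) (S j) * t)).
Proof.
  set (u := freq m j * t). set (w := (t - p) / 2).
  assert (HX : u + w = freq (S m) j * t - p / 2) by (unfold u, w, freq; rewrite S_INR; field).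
  assert (HY : u - w = freq (S m) (S j) * t + p / 2) by (unfold u, w, freq; rewrite !S_INR; field).
  assert (Hcs : 2 * cos u * sin w = sin (u + w) - sin (u - w)) by (rewrite sin_plus, sin_minus; ring).
  assert (Hss : 2 * sin u * sin w = cos (u - w) - cos (u + w)) by (rewrite cos_plus, cos_minus; ring).
  transitivity (a * (2 * cos u * sin w) + b * (2 * sin u * sin w)); [ring |].
  rewrite Hcs, Hss, HX, HY, sin_minus, sin_plus, cos_minus, cos_plus. ring.
Qed.

Lemma mid_harmonic_mul_factor m f p :
  mid_harmonic m f -> mid_harmonic (S m) (fun t => f t * (2 * sin ((t - p) / 2))).
Proof.
  intros Hf. induction Hf as [| f j a b Hj Hjm Hf IH | f g Hf IH E].
  - eapply mid_harmonic_ext; [apply mid_harmonic_0 |]. intro; cbv beta; ring.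
  - set (c := cos (p / 2)). set (s := sin (p / 2)).
    eapply mid_harmonic_ext.
    + eapply (mid_harmonic_add _ _ (S j) (- a * s + b * c) (- a * c - b * s)); [lia | lia |].
      apply (mid_harmonic_add _ (fun t => f t * (2 * sin ((t - p) / 2))) j (- a * s - b * c) (a * c - b * s));
        [lia | lia | exact IH].
    + intro t. cbv beta. transitivity (f t * (2 * sin ((t - p) / 2))
        + (a * cos (freq m j * t) + b * sin (freq m j * t)) * (2 * sin ((t - p) / 2)));
        [rewrite harmonic_mul_factor; fold c s; ring | ring].
  - eapply mid_harmonic_ext; [exact IH |]. intro t; cbv beta; now rewrite E.
Qed.

Lemma gm_harmonic_decomposition m phi : (1 <= m)%nat ->
  exists A B W, mid_harmonic m W /\ A * A + B * B = 4 /\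
    forall t, gm m phi t = A * cos (freq m 0 * t) + B * sin (freq m 0 * t) + W t.
Proof.
  intros Hm. induction Hm as [| m Hm [A [B [W [HW [HAB Hg]]]]]].
  - exists (- 2 * sin (phi O / 2)), (2 * cos (phi O / 2)), (fun _ => 0).
    split; [apply mid_harmonic_0 |]. split.
    + pose proof (sin2_cos2 (phi O / 2)). unfold Rsqr in *. nra.
    + intro t. simpl. unfold freq. simpl.
      replace ((t - phi O) / 2) with ((1 / 2 - 0) * t - phi O / 2) by field. rewrite sin_minus. ring.
  - set (c := cos (phi m / 2)). set (s := sin (phi m / 2)).
    exists (- A * s - B * c), (A * c - B * s),
      (fun t => W t * (2 * sin ((t - phi m) / 2))
                + (0 + (- A * s + B * c) * cos (freq (S m) 1 * t) + (- A * c - B * s) * sin (freq (S m) 1 * t))).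
    split; [| split].
    + apply mid_harmonic_plus; [now apply mid_harmonic_mul_factor |].
      apply mid_harmonic_add; [lia | lia | apply mid_harmonic_0].
    + pose proof (sin2_cos2 (phi m / 2)). unfold Rsqr in *. fold c s in H. nra.
    + intro t. simpl gm. rewrite Hg.
      transitivity ((A * cos (freq m 0 * t) + B * sin (freq m 0 * t)) * (2 * sin ((t - phi m) / 2))
        + W t * (2 * sin ((t - phi m) / 2))); [ring | rewrite harmonic_mul_factor; fold c s; ring].
Qed.

Definition sample (m : nat) (t : R) (k : nat) : R := t + 2 * PI * INR k / INR m.

Lemma cos_plus_INR_PI x k : cos (x + INR k * PI) = (-1) ^ k * cos x.
Proof.
  induction k; [simpl; rewrite Rmult_0_l, Rplus_0_r; ring |].
  rewrite S_INR. replace (x + (INR k + 1) * PI) with ((x + INR k * PI) + PI) by ring.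
  rewrite neg_cos, IHk. simpl; ring.
Qed.

Lemma sin_plus_INR_PI x k : sin (x + INR k * PI) = (-1) ^ k * sin x.
Proof.
  induction k; [simpl; rewrite Rmult_0_l, Rplus_0_r; ring |].
  rewrite S_INR. replace (x + (INR k + 1) * PI) with ((x + INR k * PI) + PI) by ring.
  rewrite neg_sin, IHk. simpl; ring.
Qed.

Lemma pow_minus1_sq k : (-1) ^ k * (-1) ^ k = 1.
Proof. rewrite <- Rpow_mult_distr. replace (-1 * -1) with 1 by ring. apply pow1. Qed.

(* Multiplying by [2 sin (d / 2)] telescopes the sum; it closes up because [m d] is a multiple of [2 PI]. *)
Lemma fsum_cos_arith_zero m th d j :
  sin (d / 2) <> 0 -> INR m * d = 2 * INR j * PI -> fsum m (fun k => cos (th - INR k * d)) = 0.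
Proof.
  intros Hs Hmd.
  assert (H : 2 * sin (d / 2) * fsum m (fun k => cos (th - INR k * d)) = 0).
  { rewrite <- fsum_scal.
    rewrite (fsum_ext m _ (fun k => sin (th - INR k * d + d / 2) - sin (th - INR (S k) * d + d / 2))).
    - rewrite fsum_telescope. simpl INR.
      replace (th - 0 * d + d / 2) with ((th - INR m * d + d / 2) + 2 * INR j * PI) by lra.
      rewrite sin_period. ring.
    - intros k _. rewrite S_INR.
      replace (th - (INR k + 1) * d + d / 2) with ((th - INR k * d) - d / 2) by field.
      set (x := th - INR k * d). rewrite sin_plus, sin_minus. ring. }
  apply Rmult_integral in H. destruct H; [lra | assumption].
Qed.

Lemma fsum_sin_arith_zero m th d j :
  sin (d / 2) <> 0 -> INR m * d = 2 * INR j * PI -> fsum m (fun k => sin (th - INR k * d)) = 0.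
Proof.
  intros Hs Hmd. rewrite <- (fsum_cos_arith_zero m (th - PI / 2) d j Hs Hmd).
  apply fsum_ext. intros k _. rewrite <- cos_shift, <- cos_neg. f_equal. ring.
Qed.

Lemma freq_sample m j t k : (1 <= m)%nat ->
  freq m j * sample m t k = (freq m j * t - INR k * (2 * PI * INR j / INR m)) + INR k * PI.
Proof. intros. unfold freq, sample. assert (0 < INR m) by (apply lt_0_INR; lia). field. lra. Qed.

Lemma sin_half_step_neq_0 m j :
  (1 <= j)%nat -> (j + 1 <= m)%nat -> sin ((2 * PI * INR j / INR m) / 2) <> 0.
Proof.
  intros Hj Hjm. assert (0 < INR m) by (apply lt_0_INR; lia).
  assert (1 <= INR j) by (apply (le_INR 1); lia).
  assert (INR j < INR m) by (apply lt_INR; lia). pose proof PI_RGT_0.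
  replace (2 * PI * INR j / INR m / 2) with (PI * (INR j / INR m)) by (field; lra).
  assert (0 < INR j / INR m < 1).
  { split; [apply Rdiv_lt_0_compat; lra |].
    apply (Rmult_lt_reg_r (INR m)); [lra |]. unfold Rdiv. rewrite Rmult_assoc, Rinv_l; lra. }
  apply Rgt_not_eq, sin_gt_0; nra.
Qed.

Lemma alternating_sample_mid_harmonic m f t : (1 <= m)%nat -> mid_harmonic m f ->
  fsum m (fun k => (-1) ^ k * f (sample m t k)) = 0.
Proof.
  intros Hm Hf. assert (0 < INR m) by (apply lt_0_INR; lia).
  induction Hf as [| f j a b Hj Hjm Hf IH | f g Hf IH E].
  - rewrite (fsum_ext m _ (fun _ => 0)), fsum_const; [ring | intros; ring].
  - set (d := 2 * PI * INR j / INR m).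
    rewrite (fsum_ext m _ (fun k => (-1) ^ k * f (sample m t k)
               + (a * cos (freq m j * t - INR k * d) + b * sin (freq m j * t - INR k * d)))).
    + rewrite fsum_plus, IH, fsum_plus, !fsum_scal.
      rewrite (fsum_cos_arith_zero m _ d j), (fsum_sin_arith_zero m _ d j);
        try apply sin_half_step_neq_0; auto; try ring; unfold d; field; lra.
    + intros k _. rewrite freq_sample, cos_plus_INR_PI, sin_plus_INR_PI by auto. fold d.
      transitivity ((-1) ^ k * f (sample m t k) + ((-1) ^ k * (-1) ^ k) *
        (a * cos (freq m j * t - INR k * d) + b * sin (freq m j * t - INR k * d)));
        [ring | rewrite pow_minus1_sq; ring].
  - rewrite <- IH. apply fsum_ext. intros; now rewrite E.
Qed.

Lemma alternating_sample_top m A B t : (1 <= m)%nat ->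
  fsum m (fun k => (-1) ^ k * (A * cos (freq m 0 * sample m t k) + B * sin (freq m 0 * sample m t k)))
  = INR m * (A * cos (freq m 0 * t) + B * sin (freq m 0 * t)).
Proof.
  intros Hm. rewrite <- fsum_const. apply fsum_ext. intros k _.
  rewrite freq_sample by auto. simpl INR.
  replace (freq m 0 * t - INR k * (2 * PI * 0 / INR m)) with (freq m 0 * t) by (unfold Rdiv; ring).
  rewrite cos_plus_INR_PI, sin_plus_INR_PI.
  transitivity (((-1) ^ k * (-1) ^ k) * (A * cos (freq m 0 * t) + B * sin (freq m 0 * t)));
    [ring | rewrite pow_minus1_sq; ring].
Qed.

(* The alternating sum over the samples kills every frequency except [+-m/2]. *)
Lemma alternating_sample_gm m phi : (1 <= m)%nat ->
  exists A B, A * A + B * B = 4 /\ forall t,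
    fsum m (fun k => (-1) ^ k * gm m phi (sample m t k))
    = INR m * (A * cos (freq m 0 * t) + B * sin (freq m 0 * t)).
Proof.
  intros Hm. destruct (gm_harmonic_decomposition m phi Hm) as [A [B [W [HW [HAB Hg]]]]].
  exists A, B. split; [exact HAB |]. intro t.
  rewrite (fsum_ext m _ (fun k => (-1) ^ k * (A * cos (freq m 0 * sample m t k)
             + B * sin (freq m 0 * sample m t k)) + (-1) ^ k * W (sample m t k))).
  - rewrite fsum_plus, alternating_sample_top, alternating_sample_mid_harmonic by auto. ring.
  - intros; rewrite Hg; ring.
Qed.

Lemma polar_angle_exists x y : x * x + y * y = 1 -> exists th, cos th = x /\ sin th = y.
Proof.
  intros H. assert (Hx : -1 <= x <= 1) by nra.
  assert (E : sqrt (1 - x²) = Rabs y).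
  { replace (1 - x²) with (y * y) by (unfold Rsqr; lra). apply sqrt_Rsqr_abs. }
  destruct (Rle_or_lt 0 y).
  - exists (acos x). rewrite cos_acos, sin_acos, E, Rabs_right; auto; lra.
  - exists (- acos x). rewrite cos_neg, sin_neg, cos_acos, sin_acos, E, Rabs_left; auto; lra.
Qed.

Lemma fsum_lt N f g : (1 <= N)%nat -> (forall n, (n < N)%nat -> f n < g n) -> fsum N f < fsum N g.
Proof.
  intros HN H. destruct N as [|N]; [lia |]. simpl.
  assert (fsum N f <= fsum N g) by (apply fsum_le; intros; left; apply H; lia).
  specialize (H N ltac:(lia)). lra.
Qed.

Lemma gm_abs_max_ge_2 m phi : (1 <= m)%nat -> exists s, 0 <= s <= 2 * PI /\ 2 <= Rabs (gm m phi s).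
Proof.
  intros Hm. destruct (alternating_sample_gm m phi Hm) as [A [B [HAB Hs]]].
  destruct (polar_angle_exists (A / 2) (B / 2)) as [th [Hc Hsn]]; [nra |].
  assert (0 < INR m) by (apply lt_0_INR; lia).
  set (t := th / freq m 0).
  assert (Ht : freq m 0 * t = th) by (unfold t, freq; simpl; field; lra).
  specialize (Hs t). rewrite Ht, Hc, Hsn in Hs.
  destruct (classic (exists k, 2 <= Rabs (gm m phi (sample m t k)))) as [[k Hk]|Hn].
  - exists (wrap (sample m t k)). split; [pose proof (wrap_bounds (sample m t k)); lra |]. now rewrite gm_abs_wrap_time.
  - exfalso. assert (Hlt : fsum m (fun k => (-1) ^ k * gm m phi (sample m t k)) < fsum m (fun _ => 2)).
    { apply fsum_lt; [exact Hm |]. intros k _. apply Rnot_le_lt. intro Hk. apply Hn. exists k.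
      eapply Rle_trans; [exact Hk |]. rewrite <- (Rmult_1_l (Rabs _)), <- (pow_1_abs k), <- Rabs_mult.
      apply Rle_abs. }
    rewrite Hs, fsum_const in Hlt. nra.
Qed.

Lemma gm_translate m phi psi s t :
  (forall j, (j < m)%nat -> s - phi j = t - psi j) -> gm m phi s = gm m psi t.
Proof.
  induction m; intros H; simpl; [reflexivity |].
  rewrite IHm by (intros; apply H; lia). now rewrite H by lia.
Qed.

Lemma gm_factor_zero m phi t j :
  (j < m)%nat -> sin ((t - phi j) / 2) = 0 -> gm m phi t = 0.
Proof.
  induction m; intros Hj H; [lia |]. simpl. destruct (Nat.eq_dec j m) as [->|Hne].
  - rewrite H. ring.
  - rewrite (IHm ltac:(lia) H). ring.
Qed.

Lemma gm_succ_shift m phi t :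
  gm m (fun j => phi (S j)) t * (2 * sin ((t - phi O) / 2)) = gm (S m) phi t.
Proof. induction m; simpl in *; [ring |]. rewrite <- IHm. ring. Qed.

(* The zeros of [z^m - 1], listed clockwise from 1. *)
Definition unity_phases (m : nat) (j : nat) : R := - (2 * PI * INR j / INR m).

Lemma gm_unity_antiperiodic m t : (1 <= m)%nat ->
  gm m (unity_phases m) (t + 2 * PI / INR m) = - gm m (unity_phases m) t.
Proof.
  intros Hm. assert (0 < INR m) by (apply lt_0_INR; lia).
  set (phi := unity_phases m).
  assert (Hshift : gm m phi (t + 2 * PI / INR m) = gm m (fun j => phi (S j)) t).
  { apply gm_translate. intros j _. unfold phi, unity_phases. rewrite S_INR. field. lra. }
  assert (Hlast : sin ((t - phi m) / 2) = - sin ((t - phi O) / 2)).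
  { unfold phi, unity_phases. simpl INR.
    replace ((t - - (2 * PI * INR m / INR m)) / 2) with ((t - - (2 * PI * 0 / INR m)) / 2 + PI)
      by (field; lra). apply neg_sin. }
  pose proof (gm_succ_shift m phi t) as Hsucc. simpl gm in Hsucc. rewrite Hlast in Hsucc. rewrite Hshift.
  destruct (Req_dec (sin ((t - phi O) / 2)) 0) as [Hz|Hz].
  - rewrite (gm_factor_zero m phi t O), (gm_factor_zero m (fun j => phi (S j)) t (pred m)); auto; [ring | lia |].
    replace (S (pred m)) with m by lia. rewrite Hlast, Hz. ring.
  - apply (Rmult_eq_reg_r (2 * sin ((t - phi O) / 2))); [rewrite Hsucc; ring | lra].
Qed.

Lemma gm_unity_sample m t k : (1 <= m)%nat ->
  gm m (unity_phases m) (sample m t k) = (-1) ^ k * gm m (unity_phases m) t.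
Proof.
  intros Hm. assert (0 < INR m) by (apply lt_0_INR; lia). induction k.
  - unfold sample. simpl. replace (t + 2 * PI * 0 / INR m) with t by (field; lra). ring.
  - replace (sample m t (S k)) with (sample m t k + 2 * PI / INR m)
      by (unfold sample; rewrite S_INR; field; lra).
    rewrite gm_unity_antiperiodic, IHk by auto. simpl; ring.
Qed.

Lemma gm_unity_abs_le_2 m t : (1 <= m)%nat -> Rabs (gm m (unity_phases m) t) <= 2.
Proof.
  intros Hm. destruct (alternating_sample_gm m (unity_phases m) Hm) as [A [B [HAB Hs]]].
  specialize (Hs t). assert (0 < INR m) by (apply lt_0_INR; lia).
  rewrite (fsum_ext m _ (fun _ => gm m (unity_phases m) t)), fsum_const in Hs.
  2: { intros k _. rewrite gm_unity_sample, <- Rmult_assoc, pow_minus1_sq by auto. ring. }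
  apply Rmult_eq_reg_l in Hs; [| lra]. rewrite Hs.
  pose proof (sin2_cos2 (freq m 0 * t)). unfold Rsqr in H0.
  set (c := cos (freq m 0 * t)) in *. set (s := sin (freq m 0 * t)) in *.
  assert (E : (A * c + B * s) * (A * c + B * s) = (A * A + B * B) * (s * s + c * c) - (A * s - B * c) * (A * s - B * c))
    by ring.
  rewrite HAB, H0 in E. pose proof (Rle_0_sqr (A * s - B * c)). unfold Rsqr in *.
  apply Rabs_le. split; nra.
Qed.

(** * Level sets of [gm] are finite *)

Fixpoint is_poly (n : nat) (f : R -> R) : Prop :=
  match n with
  | O => exists c, forall u, f u = c
  | S k => exists c g, is_poly k g /\ forall u, f u = c + u * g u
  end.

Lemma is_poly_ext n f g : is_poly n f -> (forall u, f u = g u) -> is_poly n g.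
Proof.
  destruct n; simpl; intros Hf E.
  - destruct Hf as [c H]. exists c; intros; rewrite <- E; auto.
  - destruct Hf as [c [f' [H1 H2]]]. exists c, f'; split; auto. intros; rewrite <- E; auto.
Qed.

Lemma is_poly_const n c : is_poly n (fun _ => c).
Proof.
  revert c; induction n; intros c; simpl; [exists c; auto |].
  exists c, (fun _ => 0). split; [apply IHn | intros; ring].
Qed.

Lemma is_poly_succ n f : is_poly n f -> is_poly (S n) f.
Proof.
  revert f; induction n; intros f Hf.
  - destruct Hf as [c Hc]. exists c, (fun _ => 0). split; [exists 0; auto | intros; rewrite Hc; ring].
  - destruct Hf as [c [g [Hg E]]]. exists c, g. split; [now apply IHn | exact E].
Qed.

Lemma is_poly_le n k f : (n <= k)%nat -> is_poly n f -> is_poly k f.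
Proof. intros H; induction H; intros; auto. now apply is_poly_succ, IHle. Qed.

Lemma is_poly_plus n f g : is_poly n f -> is_poly n g -> is_poly n (fun u => f u + g u).
Proof.
  revert f g; induction n; intros f g Hf Hg.
  - destruct Hf as [a Ha], Hg as [b Hb]. exists (a + b); intros; rewrite Ha, Hb; auto.
  - destruct Hf as [a [f' [Hf' Ef]]], Hg as [b [g' [Hg' Eg]]].
    exists (a + b), (fun u => f' u + g' u). split; [auto | intros; rewrite Ef, Eg; ring].
Qed.

Lemma is_poly_scal n c f : is_poly n f -> is_poly n (fun u => c * f u).
Proof.
  revert f; induction n; intros f Hf.
  - destruct Hf as [a Ha]. exists (c * a); intros; rewrite Ha; auto.
  - destruct Hf as [a [f' [Hf' Ef]]]. exists (c * a), (fun u => c * f' u).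
    split; [auto | intros; rewrite Ef; ring].
Qed.

Lemma is_poly_mul n k f g : is_poly n f -> is_poly k g -> is_poly (n + k) (fun u => f u * g u).
Proof.
  revert f; induction n; intros f Hf Hg.
  - destruct Hf as [c Hc]. eapply is_poly_ext; [exact (is_poly_scal k c g Hg) |].
    intros; rewrite Hc; auto.
  - destruct Hf as [c [f' [Hf' Ef]]].
    apply (is_poly_ext _ (fun u => c * g u + u * (f' u * g u))); [| intros; rewrite Ef; ring].
    apply is_poly_plus.
    + apply (is_poly_le k); [lia | now apply is_poly_scal].
    + exists 0, (fun u => f' u * g u). split; [now apply IHn | intros; ring].
Qed.

Lemma is_poly_factor_root n f r : is_poly (S n) f -> f r = 0 ->
  exists k, is_poly n k /\ forall u, f u = (u - r) * k u.
Proof.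
  revert f; induction n; intros f Hf Hr.
  - destruct Hf as [c [g [[d Hd] E]]]. exists (fun _ => d). split; [exists d; auto |].
    intros. rewrite E, Hd. rewrite E, Hd in Hr. nra.
  - destruct Hf as [c [g [Hg E]]].
    destruct (IHn (fun u => g u - g r)) as [k' [Hk' Ek']].
    + eapply is_poly_ext; [exact (is_poly_plus _ _ _ Hg (is_poly_const (S n) (- g r))) |].
      intros; cbv beta; ring.
    + ring.
    + exists (fun u => g u + r * k' u). split.
      * apply is_poly_plus; [exact Hg |]. now apply is_poly_succ, is_poly_scal.
      * intros u. rewrite E. rewrite E in Hr. specialize (Ek' u). simpl in Ek'.
        assert (c = - (r * g r)) by lra. subst c. nra.
Qed.

Lemma is_poly_roots_finite n f : is_poly n f -> (exists u0, f u0 <> 0) ->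
  exists L, forall u, f u = 0 -> In u L.
Proof.
  revert f; induction n; intros f Hf [u0 Hu0].
  - destruct Hf as [c Hc]. exists nil. intros u Hu. rewrite Hc in Hu, Hu0. contradiction.
  - destruct (classic (exists r, f r = 0)) as [[r Hr]|Hn].
    + destruct (is_poly_factor_root n f r Hf Hr) as [k [Hk E]].
      destruct (IHn k Hk) as [L HL].
      { exists u0. intro Hk0. apply Hu0. rewrite E, Hk0. ring. }
      exists (r :: L). intros u Hu. rewrite E in Hu. apply Rmult_integral in Hu.
      destruct Hu; [left; lra | right; auto].
    + exists nil. intros u Hu; exfalso; eauto.
Qed.

(* With [u = tan ((t - phi 0) / 2)], the j-th squared factor of [gm] is [cos^2 * half_angle_quadratic u]. *)
Definition half_angle_quadratic (phi : nat -> R) (j : nat) (u : R) : R :=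
  (2 - 2 * cos (phi j - phi O)) + u * ((- 4 * sin (phi j - phi O)) + u * (2 + 2 * cos (phi j - phi O))).

Lemma half_angle_quadratic_poly phi j : is_poly 2 (half_angle_quadratic phi j).
Proof.
  exists (2 - 2 * cos (phi j - phi O)), (fun u => (- 4 * sin (phi j - phi O)) + u * (2 + 2 * cos (phi j - phi O))).
  split; [| reflexivity]. exists (- 4 * sin (phi j - phi O)), (fun _ => 2 + 2 * cos (phi j - phi O)).
  split; [exists (2 + 2 * cos (phi j - phi O)); auto | reflexivity].
Qed.

Lemma factor_sq_half_angle phi j t : cos ((t - phi O) / 2) <> 0 ->
  (2 * sin ((t - phi j) / 2)) * (2 * sin ((t - phi j) / 2)) =
  cos ((t - phi O) / 2) * cos ((t - phi O) / 2) * half_angle_quadratic phi j (tan ((t - phi O) / 2)).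
Proof.
  intros Hc. set (w := (t - phi O) / 2). set (al := phi j - phi O).
  replace ((t - phi j) / 2) with (w - al / 2) by (unfold w, al; field).
  assert (E : 2 * sin (w - al / 2) * (2 * sin (w - al / 2)) = 2 - 2 * cos (2 * (w - al / 2)))
    by (rewrite cos_2a_sin; ring).
  rewrite E. replace (2 * (w - al / 2)) with (2 * w - al) by field.
  rewrite cos_minus, cos_2a, sin_2a. unfold half_angle_quadratic, tan. fold w al.
  pose proof (sin2_cos2 w). unfold Rsqr in H. field_simplify; [nra | exact Hc].
Qed.

Fixpoint gm_sq_poly (m : nat) (phi : nat -> R) (u : R) : R :=
  match m with O => 1 | S k => gm_sq_poly k phi u * half_angle_quadratic phi k u end.

Lemma gm_sq_poly_poly m phi : is_poly (2 * m) (gm_sq_poly m phi).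
Proof.
  induction m; [exists 1; auto |]. replace (2 * S m)%nat with (2 * m + 2)%nat by lia.
  apply (is_poly_mul (2 * m) 2 (gm_sq_poly m phi)); [exact IHm | apply half_angle_quadratic_poly].
Qed.

Lemma gm_sq_poly_0 m phi : (1 <= m)%nat -> gm_sq_poly m phi 0 = 0.
Proof.
  induction 1; simpl; [| rewrite IHle; ring].
  unfold half_angle_quadratic. rewrite Rminus_diag, cos_0. ring.
Qed.

Lemma gm_sq_half_angle m phi t : cos ((t - phi O) / 2) <> 0 ->
  gm m phi t * gm m phi t =
  (cos ((t - phi O) / 2) * cos ((t - phi O) / 2)) ^ m * gm_sq_poly m phi (tan ((t - phi O) / 2)).
Proof.
  intros Hc. induction m; [simpl; ring |]. simpl gm. simpl gm_sq_poly.
  transitivity ((gm m phi t * gm m phi t) * ((2 * sin ((t - phi m) / 2)) * (2 * sin ((t - phi m) / 2))));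
    [ring |]. rewrite IHm, factor_sq_half_angle by exact Hc. simpl. ring.
Qed.

Lemma one_plus_tan_sq_poly m : is_poly (2 * m) (fun u => (1 + u * u) ^ m).
Proof.
  induction m; [exists 1; auto |]. replace (2 * S m)%nat with (2 * m + 2)%nat by lia.
  apply (is_poly_ext _ (fun u => (1 + u * u) ^ m * (1 + u * u))); [| intros; simpl; ring].
  apply (is_poly_mul (2 * m) 2); [exact IHm |].
  exists 1, (fun u => u). split; [| intros; ring].
  exists 0, (fun _ => 1). split; [exists 1; auto | intros; ring].
Qed.

Lemma cos_sq_one_plus_tan_sq w : cos w <> 0 -> cos w * cos w * (1 + tan w * tan w) = 1.
Proof. intros Hc. unfold tan. pose proof (sin2_cos2 w). unfold Rsqr in H. field_simplify; [lra | exact Hc]. Qed.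

Lemma in_period_of_shift x t (k : Z) :
  t = x + IZR k * (2 * PI) -> 0 <= t <= 2 * PI -> In t (wrap x :: wrap x + 2 * PI :: nil).
Proof.
  intros Ht Hr. pose proof PI_RGT_0. pose proof (wrap_bounds x).
  destruct (wrap_shift x) as [k' Hk'].
  assert (Hd : t - wrap x = IZR (k - k') * (2 * PI)) by (rewrite minus_IZR; lra).
  assert (IZR (-1) < IZR (k - k') <= IZR 1) by (simpl; split; nra).
  destruct H1 as [H1 H2]. apply lt_IZR in H1. apply le_IZR in H2.
  destruct (Z.eq_dec (k - k') 0) as [E|E].
  - left. rewrite E in Hd. simpl in Hd. lra.
  - right; left. replace (k - k')%Z with 1%Z in Hd by lia. simpl in Hd. lra.
Qed.

Lemma gm_level_poly_root m phi h t : cos ((t - phi O) / 2) <> 0 -> Rabs (gm m phi t) = h ->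
  gm_sq_poly m phi (tan ((t - phi O) / 2)) - h * h * (1 + tan ((t - phi O) / 2) * tan ((t - phi O) / 2)) ^ m = 0.
Proof.
  intros Hc Hlev. pose proof (gm_sq_half_angle m phi t Hc) as Hq. set (w := (t - phi O) / 2) in *.
  assert (Hsq : gm m phi t * gm m phi t = h * h).
  { rewrite <- Hlev, <- Rabs_mult, Rabs_right; [reflexivity | apply Rle_ge; nra]. }
  assert (Hpow : ((cos w * cos w) ^ m) * ((1 + tan w * tan w) ^ m) = 1).
  { rewrite <- Rpow_mult_distr, cos_sq_one_plus_tan_sq by exact Hc. apply pow1. }
  assert (Hpos : 0 < (cos w * cos w) ^ m).
  { apply pow_lt. destruct (Rlt_or_le 0 (cos w)); [nra |]. assert (cos w < 0) by lra. nra. }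
  apply (Rmult_eq_reg_l ((cos w * cos w) ^ m)); [| lra].
  transitivity ((cos w * cos w) ^ m * gm_sq_poly m phi (tan w)
                - h * h * (((cos w * cos w) ^ m) * ((1 + tan w * tan w) ^ m))); [ring |].
  rewrite Hpow, <- Hq, Hsq. ring.
Qed.

Lemma atan_tan_shift w : cos w <> 0 -> exists k : Z, w = atan (tan w) + IZR k * PI.
Proof.
  intros Hc. set (a := atan (tan w)).
  assert (Hta : tan a = tan w) by apply tan_atan.
  assert (Hca : 0 < cos a) by (apply cos_gt_0; pose proof (atan_bound (tan w)); unfold a; lra).
  assert (Hsin : sin (w - a) = 0).
  { rewrite sin_minus.
    replace (sin w * cos a - cos w * sin a) with (cos a * cos w * (tan w - tan a))
      by (unfold tan; field; split; lra).
    rewrite Hta. ring. }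
  destruct (sin_eq_0_0 _ Hsin) as [k Hk]. exists k. lra.
Qed.

(* Level points are where the polynomial [gm_sq_poly - h^2 (1 + u^2)^m] vanishes at
   [u = tan ((t - phi 0) / 2)], or where that tangent is undefined. *)
Lemma gm_level_set_finite m phi h : (1 <= m)%nat -> 0 < h ->
  exists L : list R, forall t, 0 <= t <= 2 * PI -> Rabs (gm m phi t) = h -> In t L.
Proof.
  intros Hm Hh.
  destruct (is_poly_roots_finite (2 * m) (fun u => gm_sq_poly m phi u - h * h * (1 + u * u) ^ m)) as [L HL].
  - apply (is_poly_ext _ (fun u => gm_sq_poly m phi u + (- (h * h)) * (1 + u * u) ^ m)); [| intros; ring].
    apply is_poly_plus; [apply gm_sq_poly_poly | apply is_poly_scal, one_plus_tan_sq_poly].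
  - exists 0. rewrite gm_sq_poly_0 by exact Hm.
    replace (1 + 0 * 0) with 1 by ring. rewrite pow1. nra.
  - set (base := fun x => wrap x :: wrap x + 2 * PI :: nil).
    exists (flat_map base ((phi O + PI) :: map (fun u => phi O + 2 * atan u) L)).
    intros t Ht Hlev. apply in_flat_map.
    destruct (Req_dec (cos ((t - phi O) / 2)) 0) as [Hc|Hc].
    + destruct (cos_eq_0_0 _ Hc) as [k Hk]. exists (phi O + PI). split; [now left |].
      apply (in_period_of_shift _ _ k); [lra | exact Ht].
    + exists (phi O + 2 * atan (tan ((t - phi O) / 2))). split.
      * right. apply (in_map (fun u => phi O + 2 * atan u)), HL, gm_level_poly_root; assumption.
      * destruct (atan_tan_shift _ Hc) as [k Hk].
        apply (in_period_of_shift _ _ k); [lra | exact Ht].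
Qed.

Definition strictly_increasing (s : nat -> nat) : Prop := forall n, (s n < s (S n))%nat.

Lemma strictly_increasing_ge s : strictly_increasing s -> forall n, (n <= s n)%nat.
Proof. intros Hs n; induction n; [lia |]. specialize (Hs n); lia. Qed.

Lemma strictly_increasing_le s : strictly_increasing s -> forall n p, (n <= p)%nat -> (s n <= s p)%nat.
Proof. intros Hs n p H; induction H; [lia |]. specialize (Hs m); lia. Qed.

Lemma strictly_increasing_comp s s' :
  strictly_increasing s -> strictly_increasing s' -> strictly_increasing (fun n => s (s' n)).
Proof.
  intros Hs Hs' n. pose proof (strictly_increasing_le s Hs (S (s' n)) (s' (S n)) (Hs' n)).
  specialize (Hs (s' n)). lia.
Qed.

Lemma Un_cv_subseq u l s : Un_cv u l -> strictly_increasing s -> Un_cv (fun n => u (s n)) l.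
Proof.
  intros H Hs eps Heps. destruct (H eps Heps) as [N HN]. exists N. intros n Hn.
  apply HN. pose proof (strictly_increasing_ge s Hs n). lia.
Qed.

Lemma bolzano_weierstrass_subseq (u : nat -> R) a b : (forall n, a <= u n <= b) ->
  exists s l, strictly_increasing s /\ Un_cv (fun n => u (s n)) l.
Proof.
  intros Hb. destruct (Bolzano_Weierstrass u (fun c => a <= c <= b) (compact_P3 a b) Hb) as [l Hl].
  assert (Hc : forall N k, exists p, (N <= p)%nat /\ Rabs (u p - l) < / INR (S k)).
  { intros N k. assert (Hpos : 0 < / INR (S k)) by (apply Rinv_0_lt_compat, lt_0_INR; lia).
    destruct (Hl (fun y => Rabs (y - l) < / INR (S k)) N) as [p Hp]; [| eauto].
    exists (mkposreal _ Hpos). intros y Hy. exact Hy. }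
  set (next := fun N k => proj1_sig (constructive_indefinite_description _ (Hc N k))).
  assert (Hnext : forall N k, (N <= next N k)%nat /\ Rabs (u (next N k) - l) < / INR (S k)).
  { intros; unfold next; destruct constructive_indefinite_description; auto. }
  set (s := fix s (k : nat) : nat := match k with O => next O O | S k' => next (S (s k')) k end).
  assert (Hs : forall n, Rabs (u (s n) - l) < / INR (S n)).
  { destruct n; simpl; [apply (Hnext O O) | apply (Hnext (S (s n)) (S n))]. }
  exists s, l. split.
  - intro n. simpl. destruct (Hnext (S (s n)) (S n)); lia.
  - intros eps Heps. destruct (archimed_cor1 eps Heps) as [K [HK HK0]]. exists K. intros n Hn.
    assert (/ INR (S n) <= / INR K) by (apply Rinv_le_contravar; [apply lt_0_INR; lia | apply le_INR; lia]).
    specialize (Hs n). unfold R_dist. lra.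
Qed.

Lemma bolzano_weierstrass_vector m (x : nat -> nat -> R) a b :
  (forall n j, (j < m)%nat -> a <= x n j <= b) ->
  exists s y, strictly_increasing s /\ forall j, (j < m)%nat -> Un_cv (fun n => x (s n) j) (y j).
Proof.
  induction m; intros Hb.
  - exists (fun n => n), (fun _ => 0). split; [intro; lia | intros; lia].
  - destruct IHm as [s [y [Hs Hy]]]; [intros; apply Hb; lia |].
    destruct (bolzano_weierstrass_subseq (fun n => x (s n) m) a b) as [s' [l [Hs' Hl]]];
      [intros; apply Hb; lia |].
    exists (fun n => s (s' n)), (fun j => if Nat.eqb j m then l else y j). split.
    + now apply strictly_increasing_comp.
    + intros j Hj. destruct (Nat.eqb_spec j m) as [->|Hne]; [exact Hl |].
      apply (Un_cv_subseq (fun n => x (s n) j)); [apply Hy; lia | exact Hs'].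
Qed.

Lemma Un_cv_squeeze_inv (x : nat -> R) d :
  (forall n, d <= x n <= d + / INR (S n)) -> Un_cv x d.
Proof.
  intros H eps Heps. destruct (archimed_cor1 eps Heps) as [K [HK HK0]]. exists K. intros n Hn.
  assert (/ INR (S n) <= / INR K) by (apply Rinv_le_contravar; [apply lt_0_INR; lia | apply le_INR; lia]).
  specialize (H n). unfold R_dist. rewrite Rabs_right; lra.
Qed.

Lemma Un_cv_ge_eventually (x : nat -> R) a d :
  (exists N, forall n, (N <= n)%nat -> a <= x n) -> Un_cv x d -> a <= d.
Proof.
  intros [N HN] Hx. apply Rnot_lt_le. intro Hlt.
  destruct (Hx (a - d)) as [N' HN']; [lra |].
  specialize (HN (Nat.max N N') ltac:(lia)). specialize (HN' (Nat.max N N') ltac:(lia)).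
  unfold R_dist in HN'. apply Rabs_def2 in HN'. lra.
Qed.

(** * Upper semicontinuity of the measure of superlevel sets *)

Lemma IVT_between f a b y : continuity f -> f a <= y <= f b ->
  exists z, Rmin a b <= z <= Rmax a b /\ f z = y.
Proof.
  intros Hf Hy. set (F := fun u => f u - y).
  assert (HF : continuity F) by (apply continuity_minus; [exact Hf | apply continuity_const; intros ? ?; reflexivity]).
  assert (Hab : F a * F b <= 0) by (unfold F; nra).
  unfold Rmin, Rmax. destruct (Rle_dec a b) as [Hle|Hgt].
  - destruct (IVT_cor F a b HF Hle Hab) as [z [Hz Fz]]. exists z. unfold F in Fz. split; [exact Hz | lra].
  - destruct (IVT_cor F b a HF ltac:(lra) ltac:(lra)) as [z [Hz Fz]]. exists z. unfold F in Fz. split; [exact Hz | lra].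
Qed.

Definition cell (dl : R) (k : nat) (t : R) : Prop := INR k * dl <= t <= (INR k + 1) * dl.

Lemma cell_index M dl t : (1 <= M)%nat -> 0 < dl -> 0 <= t <= INR M * dl ->
  exists k, (k < M)%nat /\ cell dl k t.
Proof.
  intros HM Hdl. induction HM as [| M HM IH]; intros Ht.
  - exists O. split; [lia |]. unfold cell. simpl in *. lra.
  - destruct (Rle_or_lt t (INR M * dl)) as [Hle|Hgt].
    + destruct IH as [k [Hk Hkt]]; [lra |]. exists k. split; [lia | exact Hkt].
    + exists M. split; [lia |]. unfold cell. rewrite S_INR in Ht. lra.
Qed.

Lemma cell_bounds M dl k t : (k < M)%nat -> 0 < dl -> cell dl k t -> 0 <= t <= INR M * dl.
Proof.
  intros Hk Hdl [H1 H2]. pose proof (pos_INR k).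
  assert (INR k + 1 <= INR M) by (rewrite <- S_INR; apply le_INR; lia). nra.
Qed.

Definition cell_above (f : R -> R) (h dl : R) (k : nat) : Prop := forall t, cell dl k t -> h < f t.

Lemma cells_above_margin f h dl M : continuity f -> 0 < dl ->
  exists mu, 0 < mu /\ forall k, (k < M)%nat -> cell_above f h dl k -> forall t, cell dl k t -> h + mu <= f t.
Proof.
  intros Hf Hdl. induction M as [| M [mu [Hmu IH]]]; [exists 1; split; [lra | intros; lia] |].
  destruct (classic (cell_above f h dl M)) as [Habove|Hnot].
  - destruct (continuity_ab_min f (INR M * dl) ((INR M + 1) * dl)) as [tm [Hmin Htm]];
      [nra | intros; apply Hf |].
    pose proof (Habove tm Htm).
    exists (Rmin mu (f tm - h)). split; [apply Rmin_pos; lra |].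
    intros k Hk Hk' t Ht. pose proof (Rmin_l mu (f tm - h)). pose proof (Rmin_r mu (f tm - h)).
    destruct (Nat.eq_dec k M) as [->|Hne].
    + specialize (Hmin t Ht). lra.
    + specialize (IH k ltac:(lia) Hk' t Ht). lra.
  - exists mu. split; [exact Hmu |]. intros k Hk Hk' t Ht. destruct (Nat.eq_dec k M) as [->|Hne].
    + contradiction.
    + exact (IH k ltac:(lia) Hk' t Ht).
Qed.

Lemma superlevel_cell_or_level f h dl M t : continuity f -> (1 <= M)%nat -> 0 < dl ->
  0 <= t <= INR M * dl -> h <= f t ->
  (exists k, (k < M)%nat /\ cell_above f h dl k /\ cell dl k t) \/
  (exists z, 0 <= z <= INR M * dl /\ f z = h /\ z - dl <= t <= z + dl).
Proof.
  intros Hf HM Hdl Ht Hh. destruct (cell_index M dl t HM Hdl Ht) as [k [Hk Hkt]].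
  destruct (classic (cell_above f h dl k)) as [Habove|Hnot]; [left; eauto |]. right.
  apply not_all_ex_not in Hnot. destruct Hnot as [s Hs]. apply imply_to_and in Hs.
  destruct Hs as [Hs Hfs]. apply Rnot_lt_le in Hfs.
  destruct (IVT_between f s t h Hf ltac:(lra)) as [z [Hz Hfz]].
  assert (Hzk : cell dl k z) by (unfold cell, Rmin, Rmax in *; destruct Rle_dec; lra).
  exists z. split; [exact (cell_bounds M dl k z Hk Hdl Hzk) | split; [exact Hfz |]].
  unfold cell in *. lra.
Qed.

Lemma Rle_of_le_add_inv s d c : 0 <= c -> (forall M, (1 <= M)%nat -> s <= d + c / INR M) -> s <= d.
Proof.
  intros Hc H. apply Rnot_lt_le. intro Hlt.
  destruct (archimed_cor1 ((s - d) / (c + 1))) as [M [HM1 HM2]]; [apply Rdiv_lt_0_compat; lra |].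
  specialize (H M ltac:(lia)). assert (0 < INR M) by (apply lt_0_INR; lia).
  assert (c / INR M < s - d); [| lra].
  apply (Rmult_lt_reg_r (c + 1 / INR M)); [apply Rplus_le_lt_0_compat; [exact Hc | apply Rdiv_lt_0_compat; lra] |].
  apply (Rmult_lt_compat_l (c + 1)) in HM1; [| lra].
  replace ((c + 1) * ((s - d) / (c + 1))) with (s - d) in HM1 by (field; lra).
  unfold Rdiv in *. nra.
Qed.

(* Cover the superlevel set of [f] by the grid cells on which [f > h], which lie in the
   superlevel sets of [fs n] for large [n], and by [dl]-neighbourhoods of the level points;
   then let the mesh [dl] tend to 0. *)
Lemma mes_superlevel_le_limit (f : R -> R) (fs : nat -> R -> R) (x : nat -> R) L h d s Z :
  0 < L -> continuity f ->
  (forall eps, 0 < eps -> exists N, forall n t, (N <= n)%nat -> Rabs (fs n t - f t) < eps) ->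
  (forall t, 0 <= t <= L -> f t = h -> In t Z) ->
  (forall n, mes_is (fun t => 0 <= t <= L /\ h <= fs n t) (x n)) -> Un_cv x d ->
  mes_is (fun t => 0 <= t <= L /\ h <= f t) s -> s <= d.
Proof.
  intros HL Hf Hcv HZ Hx Hxd Hs.
  apply (Rle_of_le_add_inv s d (2 * L * INR (length Z))); [pose proof (pos_INR (length Z)); nra |].
  intros M HM. assert (HMpos : 0 < INR M) by (apply lt_0_INR; lia).
  set (dl := L / INR M). assert (Hdl : 0 < dl) by (unfold dl; apply Rdiv_lt_0_compat; lra).
  assert (HMdl : INR M * dl = L) by (unfold dl; field; lra).
  set (K := fun t => exists k, (k < M)%nat /\ cell_above f h dl k /\ cell dl k t).
  destruct (mes_exists_bounded K 0 L) as [a Ha]; [lra | |].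
  { intros t [k [Hk [_ Ht]]]. rewrite <- HMdl. exact (cell_bounds M dl k t Hk Hdl Ht). }
  assert (Hsa : s <= a + fsum (length Z) (fun i => (nth i Z 0 + dl) - (nth i Z 0 - dl))).
  { apply (mes_le_add_cover (fun t => 0 <= t <= L /\ h <= f t) K
             (fun t => exists z, In z Z /\ z - dl <= t <= z + dl) s a); auto.
    - intros t [Ht Hh]. rewrite <- HMdl in Ht.
      destruct (superlevel_cell_or_level f h dl M t Hf HM Hdl Ht Hh) as [HK|[z [Hz [Hfz Hzt]]]];
        [now left | right]. exists z. split; [apply HZ; [lra | exact Hfz] | exact Hzt].
    - apply cover_length_fsum; [intros; lra |]. intros t [z [Hz Hzt]].
      destruct (In_nth Z z 0 Hz) as [i [Hi Hnth]]. exists i. rewrite Hnth. split; [exact Hi | exact Hzt]. }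
  rewrite (fsum_ext _ _ (fun _ => 2 * dl)), fsum_const in Hsa by (intros; ring).
  assert (Had : a <= d).
  { destruct (cells_above_margin f h dl M Hf Hdl) as [mu [Hmu Hmargin]].
    apply (Un_cv_ge_eventually x a d); [| exact Hxd].
    destruct (Hcv mu Hmu) as [N HN]. exists N. intros n Hn.
    apply (mes_mono K (fun t => 0 <= t <= L /\ h <= fs n t) a (x n)); [| exact Ha | apply Hx].
    intros t [k [Hk [Habove Ht]]]. split; [rewrite <- HMdl; exact (cell_bounds M dl k t Hk Hdl Ht) |].
    specialize (Hmargin k Hk Habove t Ht). specialize (HN n t Hn). apply Rabs_def2 in HN. lra. }
  replace (2 * L * INR (length Z) / INR M) with (INR (length Z) * (2 * dl)) by (unfold dl; field; lra).
  lra.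
Qed.

(** * The function [delta_m] *)

Lemma mes_superlevel_exists m phi h : exists x, mes_is (superlevel m phi h) x.
Proof. apply (mes_exists_bounded _ 0 (2 * PI)); [pose proof PI_RGT_0; lra | now intros t [Ht _]]. Qed.

Lemma delta_exists m h : exists d, delta_is m h d.
Proof.
  apply (is_inf_exists _ 0).
  - destruct (mes_superlevel_exists m (fun _ => 0) h) as [x Hx]. eauto.
  - intros x [phi Hx]. exact (mes_nonneg _ _ Hx).
Qed.

Lemma delta_is_unique m h d d' : delta_is m h d -> delta_is m h d' -> d = d'.
Proof. intros [H1 H2] [K1 K2]. apply Rle_antisym; [apply K2 | apply H2]; auto. Qed.

Lemma mes_superlevel_0 m phi : mes_is (superlevel m phi 0) (2 * PI).
Proof.
  pose proof PI_RGT_0. replace (2 * PI) with (2 * PI - 0) by ring.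
  eapply mes_ext; [| apply mes_interval; lra]. intro t. unfold superlevel.
  split; [intros Ht; split; [exact Ht | apply Rabs_pos] | tauto].
Qed.

Lemma delta_is_0 m : delta_is m 0 (2 * PI).
Proof.
  split.
  - intros x [phi Hx]. now rewrite (mes_unique _ _ _ Hx (mes_superlevel_0 m phi)).
  - intros z Hz. apply Hz. exists (fun _ => 0). apply mes_superlevel_0.
Qed.

Lemma delta_is_2 m : (1 <= m)%nat -> delta_is m 2 0.
Proof.
  intros Hm. split.
  - intros x [phi Hx]. exact (mes_nonneg _ _ Hx).
  - intros z Hz. destruct (mes_superlevel_exists m (unity_phases m) 2) as [x Hx].
    destruct (gm_level_set_finite m (unity_phases m) 2 Hm ltac:(lra)) as [Z HZ].
    rewrite <- (mes_finite_set (superlevel m (unity_phases m) 2) Z x); [apply Hz; eauto | | exact Hx].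
    intros t [Ht Hlev]. apply HZ; [exact Ht |]. pose proof (gm_unity_abs_le_2 m t Hm). lra.
Qed.


Lemma superlevel_wrap_phases m phi h t :
  superlevel m (fun j => wrap (phi j)) h t <-> superlevel m phi h t.
Proof. unfold superlevel. now rewrite gm_abs_wrap_phases. Qed.

Lemma delta_attained m h d : (1 <= m)%nat -> 0 <= h -> delta_is m h d ->
  exists phi, mes_is (superlevel m phi h) d.
Proof.
  intros Hm Hh0 Hd. destruct (Rle_lt_or_eq_dec 0 h Hh0) as [Hh | <-].
  2: { exists (fun _ => 0). rewrite (delta_is_unique _ _ _ _ Hd (delta_is_0 m)). apply mes_superlevel_0. }
  pose proof PI_RGT_0 as HPI.
  assert (Hmin : forall n, exists p : (nat -> R) * R,
             (forall j, 0 <= fst p j <= 2 * PI) /\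
             mes_is (superlevel m (fst p) h) (snd p) /\ snd p < d + / INR (S n)).
  { intro n. destruct (is_inf_approx _ d (/ INR (S n)) Hd) as [x [[phi Hx] Hxd]];
      [apply Rinv_0_lt_compat, lt_0_INR; lia |].
    exists (fun j => wrap (phi j), x). simpl. split; [intro j; pose proof (wrap_bounds (phi j)); lra |].
    split; [| exact Hxd]. eapply mes_ext; [| exact Hx]. intro t; symmetry; apply superlevel_wrap_phases. }
  destruct (choice _ Hmin) as [P HP].
  destruct (bolzano_weierstrass_vector m (fun n => fst (P n)) 0 (2 * PI)) as [sg [phi [Hsg Hcv]]];
    [intros n j _; apply HP |].
  exists phi. destruct (mes_superlevel_exists m phi h) as [s Hs].
  replace d with s; [exact Hs |]. apply Rle_antisym; [| apply Hd; eauto].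
  destruct (gm_level_set_finite m phi h Hm Hh) as [Z HZ].
  apply (mes_superlevel_le_limit (fun t => Rabs (gm m phi t)) (fun n t => Rabs (gm m (fst (P (sg n))) t))
           (fun n => snd (P (sg n))) (2 * PI) h d s Z); auto.
  - lra.
  - apply gm_abs_continuous.
  - apply gm_uniform_limit. exact Hcv.
  - intro n. apply HP.
  - apply Un_cv_squeeze_inv. intro n. destruct (HP (sg n)) as [_ [Hx Hxd]]. split.
    + apply Hd. eauto.
    + assert (/ INR (S (sg n)) <= / INR (S n)); [| lra].
      apply Rinv_le_contravar; [apply lt_0_INR; lia | apply le_INR].
      pose proof (strictly_increasing_ge sg Hsg n). lia.
Qed.

Lemma continuous_window f z a b lo hi : continuity_pt f z -> a < b -> a <= z <= b -> lo < f z < hi ->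
  exists p q, a <= p < q /\ q <= b /\ forall u, p <= u <= q -> lo < f u < hi.
Proof.
  intros Hf Hab Hz Hlh.
  destruct (Hf (Rmin (f z - lo) (hi - f z))) as [eta [Heta Hnear]]; [apply Rmin_pos; lra |].
  pose proof (Rmin_l (f z - lo) (hi - f z)). pose proof (Rmin_r (f z - lo) (hi - f z)).
  exists (Rmax a (z - eta / 2)), (Rmin b (z + eta / 2)).
  split; [| split]; [unfold Rmax, Rmin; repeat destruct Rle_dec; lra | apply Rmin_l |].
  intros u Hu. destruct (Req_dec u z) as [->|Hne]; [lra |].
  assert (Hd : R_dist (f u) (f z) < Rmin (f z - lo) (hi - f z)).
  { apply Hnear. split; [split; [exact I | now apply not_eq_sym] |]. simpl. unfold R_dist.
    apply Rabs_def1; unfold Rmax, Rmin in Hu; repeat destruct Rle_dec; lra. }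
  unfold R_dist in Hd. apply Rabs_def2 in Hd. lra.
Qed.

Lemma delta_strict m h1 h2 d1 d2 : (1 <= m)%nat -> 0 <= h1 -> h1 < h2 -> h2 <= 2 ->
  delta_is m h1 d1 -> delta_is m h2 d2 -> d2 < d1.
Proof.
  intros Hm Hh1 H12 Hh2 Hd1 Hd2. pose proof PI_RGT_0.
  destruct (delta_attained m h1 d1 Hm Hh1 Hd1) as [phi Hphi].
  set (g := fun t => Rabs (gm m phi t)).
  destruct (gm_has_root m phi Hm) as [t0 [Ht0 Hg0]].
  destruct (gm_abs_max_ge_2 m phi Hm) as [t1 [Ht1 Hg1]].
  destruct (IVT_between g t0 t1 ((h1 + h2) / 2) (gm_abs_continuous m phi)) as [z [Hz Hgz]].
  { unfold g. rewrite Hg0, Rabs_R0. lra. }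
  destruct (continuous_window g z 0 (2 * PI) h1 h2 (gm_abs_continuous m phi z)) as [p [q [Hpq [Hq Hpq_in]]]];
    [lra | unfold Rmin, Rmax in Hz; destruct Rle_dec; lra | lra |].
  destruct (mes_superlevel_exists m phi h2) as [s2 Hs2].
  assert (Hs2d : d2 <= s2) by (apply Hd2; eauto).
  assert (Hgap : s2 + (q - p) <= d1).
  { apply (mes_add_gap (superlevel m phi h2) (superlevel m phi h1) p q 0 (2 * PI)); auto; [lra | | |].
    - now intros t [Ht _].
    - intros t [Ht Hh]. split; [exact Ht | lra].
    - intros t Ht. specialize (Hpq_in t Ht). unfold g in Hpq_in.
      split; [split; [lra | lra] | intros [_ Hh]; lra]. }
  lra.
Qed.

Theorem lemma2 (m : nat) (hm : (1 <= m)%nat) :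
  exists delta : R -> R,
    (forall h, 0 <= h <= 2 -> delta_is m h (delta h)) /\
    (forall h, 0 <= h <= 2 ->
       exists phi : nat -> R, mes_is (superlevel m phi h) (delta h)) /\
    delta 0 = 2 * PI /\ delta 2 = 0 /\
    (forall h1 h2, 0 <= h1 -> h1 < h2 -> h2 <= 2 -> delta h2 < delta h1).
Proof.
  destruct (choice (fun h d => delta_is m h d) (delta_exists m)) as [delta Hdelta].
  exists delta. split; [| split; [| split; [| split]]].
  - intros h _. apply Hdelta.
  - intros h [Hh _]. exact (delta_attained m h (delta h) hm Hh (Hdelta h)).
  - exact (delta_is_unique _ _ _ _ (Hdelta 0) (delta_is_0 m)).
  - exact (delta_is_unique _ _ _ _ (Hdelta 2) (delta_is_2 m hm)).
  - intros h1 h2 Hh1 H12 Hh2. exact (delta_strict m h1 h2 _ _ hm Hh1 H12 Hh2 (Hdelta h1) (Hdelta h2)).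
Qed.
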